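(* Let $k\geq 3$ be an integer, let $G$ be a graph, and let $G'$ be the graph obtained from $G$ by the $k$-edge-gadget transformation (with respect to any choice of orientations). Then $G$ admits a proper $k$-coloring if and only if $G'$ admits a $k$-partial $k$-coloring.
   Context: A $k$-partial $c$-coloring of a graph $G=(V,E)$ is a map $\gamma:V\to\{1,\dots,c\}$ such that every vertex $v$ has at least $\min\{k,\deg_G(v)\}$ neighbors $u$ with $\gamma(u)\neq\gamma(v)$. The $k$-edge-gadget transformation: given a graph $G$ and, for each edge $\{u,v\}\in E(G)$, a fixed choice of ordered pair $(u,v)$, the graph $G'$ is obtained from $G$ by keeping all vertices of $G$, deleting every edge $\{u,v\}$ of $G$, and for each such edge adding $k$ new vertices $(u,v,1),\dots,(u,v,k)$ that form a clique $K_k$, together with the edges $\{u,(u,v,j)\}$ for $j=1,\dots,k-1$ and the edge $\{v,(u,v,k)\}$. (The gadget vertices of distinct edges are distinct.) *)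

From mathcomp Require Import all_boot.
Set Implicit Arguments. Unset Strict Implicit. Unset Printing Implicit Defensive.

Definition simple_graph (V : finType) (e : rel V) : Prop :=
  symmetric e /\ irreflexive e.

Definition orientation (V : finType) (e : rel V) (o : rel V) : Prop :=
  (forall u v, o u v -> e u v) /\
  (forall u v, e u v -> o u v || o v u) /\
  (forall u v, o u v -> ~~ o v u).

Definition deg (V : finType) (e : rel V) (v : V) : nat := #|[set u | e v u]|.

Definition proper_coloring (V : finType) (e : rel V) (c : nat) (g : V -> 'I_c) : Prop :=
  forall u v, e u v -> g u != g v.

Definition partial_coloring (V : finType) (e : rel V) (k c : nat) (g : V -> 'I_c) : Prop :=
  forall v, minn k (deg e v) <= #|[set u | e v u & g u != g v]|.

(* Vertices of G': original vertices, plus k gadget vertices per oriented edge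
   (u,v); the gadget vertex (p, j) with j : 'I_k corresponds to (u,v,j+1). *)
Definition oedge (V : finType) (o : rel V) := {p : V * V | o p.1 p.2}.

Definition gadget_vertex (V : finType) (o : rel V) (k : nat) : finType :=
  (V + (oedge o * 'I_k))%type.

Definition gadget_attach (V : finType) (o : rel V) (k : nat)
  (u : V) (pj : oedge o * 'I_k) : bool :=
  let p := val pj.1 in let j := pj.2 in
  ((u == p.1) && (j < k.-1)) || ((u == p.2) && (j == k.-1 :> nat)).

Definition gadget_rel (V : finType) (o : rel V) (k : nat) : rel (gadget_vertex o k) :=
  fun x y =>
    match x, y with
    | inl _, inl _ => false
    | inl u, inr pj => gadget_attach u pj
    | inr pj, inl u => gadget_attach u pj
    | inr (p, i), inr (q, j) => (p == q) && (i != j)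
    end.

Arguments gadget_vertex {V} o k.
Arguments gadget_rel {V} o k.

From mathcomp Require Import all_boot zify.
Set Implicit Arguments. Unset Strict Implicit. Unset Printing Implicit Defensive.

(* Forward direction: extend a proper coloring g to the gadget of (u,v) by
   giving (u,v,j) the color g u + j (mod k), 1 <= j <= k.  The gadget clique is then
   rainbow, its first k-1 vertices avoid g u, and (u,v,k) gets g u, which
   differs from g v; so the result is even a proper coloring.
   Backward direction: every gadget vertex has degree k, so a k-partial
   coloring must separate it from all its neighbours.  The clique is then
   rainbow, so some gadget vertex carries the color of u; it cannot be
   adjacent to u, hence it is (u,v,k), which is adjacent to v. *)

Lemma proper_partial_coloring (T : finType) (r : rel T) k c (g : T -> 'I_c) :
  proper_coloring r g -> partial_coloring r k g.
Proof.
move=> gP x; apply: leq_trans (geq_minr _ _) _; rewrite /deg.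
apply: subset_leq_card; apply/subsetP => y; rewrite !inE => rxy.
by rewrite rxy eq_sym gP.
Qed.

Lemma partial_coloring_low_deg (T : finType) (r : rel T) k c (g : T -> 'I_c) x y :
  partial_coloring r k g -> deg r x <= k -> r x y -> g y != g x.
Proof.
rewrite /deg => gP degx rxy; apply/negP => /eqP gyx.
have sub : [set u | r x u & g u != g x] \subset [set u | r x u] :\ y.
  apply/subsetP => u; rewrite !inE => /andP[-> gu]; rewrite andbT.
  by apply: contra gu => /eqP ->; rewrite gyx.
have := leq_trans (gP x) (subset_leq_card sub).
by rewrite /deg (minn_idPr degx) [in X in X <= _](cardsD1 y) inE rxy ltnn.
Qed.

Lemma modn_lt_add m d : m < d + d -> m %% d = if m < d then m else m - d.
Proof.
move=> lt_m2d; case: ltnP => [/modn_small // | le_dm].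
by rewrite -{1}(subnK le_dm) modnDr modn_small // ltn_subLR.
Qed.

Section Gadget.

Variables (V : finType) (o : rel V) (n : nat).
Local Notation k := n.+1.
Local Notation G' := (gadget_rel o k).

Definition rot_color (c j : 'I_k) : 'I_k := Ordinal (ltn_pmod (c + j.+1) (ltn0Sn n)).

Lemma rot_colorE c j :
  val (rot_color c j) = if c + j.+1 < k then c + j.+1 else c + j.+1 - k.
Proof. by rewrite /= modn_lt_add //; have := ltn_ord c; have := ltn_ord j; lia. Qed.

Lemma rot_color_inj c : injective (rot_color c).
Proof.
move=> i j /(congr1 val); rewrite !rot_colorE => eq_ij; apply: ord_inj.
by move: eq_ij; have := ltn_ord c; have := ltn_ord i; have := ltn_ord j;
  repeat case: ifP; move=> *; lia.
Qed.

Lemma rot_color_eq c j : (rot_color c j == c) = (j == ord_max).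
Proof.
rewrite -!val_eqE rot_colorE /=.
by have := ltn_ord c; have := ltn_ord j; case: ifP; lia.
Qed.

Lemma rot_color_max c : rot_color c ord_max = c.
Proof. by apply/eqP; rewrite rot_color_eq. Qed.

Definition gadget_coloring (g : V -> 'I_k) (x : gadget_vertex o k) : 'I_k :=
  match x with
  | inl u => g u
  | inr (p, j) => rot_color (g (val p).1) j
  end.

Lemma gadget_attach_neq (g : V -> 'I_k) u (pj : oedge o * 'I_k) :
  (forall p : oedge o, g (val p).1 != g (val p).2) ->
  gadget_attach u pj -> gadget_coloring g (inr pj) != g u.
Proof.
case: pj => p j gp /orP[/andP[/eqP-> jn] | /andP[/eqP-> jn]] /=.
  by rewrite rot_color_eq -val_eqE /= neq_ltn jn.
have -> : j = ord_max by apply: val_inj; apply/eqP.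
by rewrite rot_color_max; apply: gp.
Qed.

Lemma gadget_coloring_proper (g : V -> 'I_k) :
  (forall p : oedge o, g (val p).1 != g (val p).2) ->
  proper_coloring G' (gadget_coloring g).
Proof.
move=> gp [u | [p i]] [w | [q j]] // att.
- by rewrite eq_sym; apply: gadget_attach_neq.
- exact: gadget_attach_neq.
case/andP: att => /eqP <- ij /=.
by apply: contra ij => /eqP /rot_color_inj ->.
Qed.

Lemma deg_gadget (p : oedge o) (i : 'I_k) : deg G' (inr (p, i)) <= k.
Proof.
rewrite /deg.
have sub : [set y | G' (inr (p, i)) y] \subset
    inl (if i == ord_max then (val p).2 else (val p).1)
    |: [set inr (p, j) | j in [set~ i]].
  apply/subsetP => -[w | [q j]]; rewrite !inE /=.
    rewrite /gadget_attach /= => /orP[/andP[/eqP -> lt_in] | /andP[/eqP -> eq_in]].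
      by rewrite (_ : i == ord_max = false) ?eqxx // -val_eqE /= ltn_eqF.
    by rewrite (_ : i == ord_max) ?eqxx // -val_eqE.
  case/andP => /eqP <- ij; apply/imsetP.
  by exists j; rewrite // !inE eq_sym.
apply: leq_trans (subset_leq_card sub) _; rewrite cardsU1.
apply: (@leq_add _ _ 1 n); first by case: (_ \notin _).
by apply: leq_trans (leq_imset_card _ _) _; rewrite cardsC1 card_ord.
Qed.

Lemma partial_gadget_coloring_neq (g : gadget_vertex o k -> 'I_k) u v :
  partial_coloring G' k g -> o u v -> g (inl u) != g (inl v).
Proof.
move=> gP ouv; pose p : oedge o := exist _ (u, v) ouv.
have sep i y : G' (inr (p, i)) y -> g y != g (inr (p, i)).
  exact: partial_coloring_low_deg gP (deg_gadget p i).
have rainbow : injective (fun j => g (inr (p, j))).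
  move=> i j gij; apply/eqP; apply: contraT => ij.
  by have := sep i (inr (p, j)); rewrite /= eqxx ij gij eqxx => /(_ isT).
have [j gj] := codomP (inj_card_onto rainbow (leqnn _) (g (inl u))).
have jmax : j == ord_max.
  apply: contraT => jn; have := sep j (inl u).
  rewrite /= /gadget_attach /= eqxx gj eqxx /=.
  suff -> : j < n by move/(_ isT).
  by rewrite -val_eqE /= in jn; rewrite ltn_neqAle jn -ltnS ltn_ord.
have := sep j (inl v); rewrite /= /gadget_attach /= eqxx gj.
by rewrite -val_eqE /= in jmax; rewrite jmax orbT eq_sym => /(_ isT).
Qed.

End Gadget.

Theorem lemma3 (k : nat) (V : finType) (e o : rel V) :
  3 <= k -> simple_graph e -> orientation e o ->
  (exists g : V -> 'I_k, proper_coloring e g) <->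
  (exists g : gadget_vertex o k -> 'I_k, partial_coloring (gadget_rel o k) k g).
Proof.
case: k => [//|n] _ _ [oe [eo _]]; split=> [[g gP] | [g gP]].
  exists (gadget_coloring g); apply: proper_partial_coloring.
  by apply: gadget_coloring_proper => p; apply/gP/oe/(valP p).
exists (fun u => g (inl u)) => u v /eo /orP[ouv | ovu].
  exact: partial_gadget_coloring_neq gP ouv.
by rewrite eq_sym; apply: partial_gadget_coloring_neq gP ovu.
Qed.
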